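(* Let $p\ge1$ and let $\hat K_x,\check K_x,\hat K_y,\check K_y,D$ be $p\times p$ matrices independent of location. Consider the full-domain 2D lattice system $$\partial_t\mathbf v_{i,j}=\delta_i(\hat K_xE_i^{1/2}-\check K_xE_i^{-1/2})\mathbf v_{i,j}+\delta_j(\hat K_yE_j^{1/2}-\check K_yE_j^{-1/2})\mathbf v_{i,j}+D\mathbf v_{i,j},$$ and the patch scheme in which the same equation holds for $\mathbf v^{I,J}_{i,j}\in\mathbb R^p$ at interior points $i=1,\dots,n_x$, $j=1,\dots,n_y$ of each patch $(I,J)$ (macroscale spacings $H_x,H_y$, widths $h_x=n_xd_x=r_xH_x$, $h_y=n_yd_y=r_yH_y$), with edge values $$\mathbf v^{I,J}_{n_x+1,j}=E_x^{r_x}\mathbf v^{I,J}_{1,j},\ \mathbf v^{I,J}_{0,j}=E_x^{-r_x}\mathbf v^{I,J}_{n_x,j},\qquad \mathbf v^{I,J}_{i,n_y+1}=E_y^{r_y}\mathbf v^{I,J}_{i,1},\ \mathbf v^{I,J}_{i,0}=E_y^{-r_y}\mathbf v^{I,J}_{i,n_y}.$$ Interpreting operators formally on smooth fields interpolating the patch values, with $E_i=\exp(d_x\partial_x)$, $E_j=\exp(d_y\partial_y)$, $E_x=\exp(H_x\partial_x)$, $E_y=\exp(H_y\partial_y)$ (so exact inter-patch shifts give $E_x^{\pm r_x/2}=E_i^{\pm n_x/2}$, $E_y^{\pm r_y/2}=E_j^{\pm n_y/2}$), the mid-patch values $\mathbf V^{I,J}:=\mathbf v^{I,J}_{(n_x+1)/2,(n_y+1)/2}$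 satisfy $$\partial_t\mathbf V^{I,J}=\delta_i(\hat K_xE_i^{1/2}-\check K_xE_i^{-1/2})\mathbf V^{I,J}+\delta_j(\hat K_yE_j^{1/2}-\check K_yE_j^{-1/2})\mathbf V^{I,J}+D\mathbf V^{I,J},$$ the same operator as the full-domain microscale system. That is, the macroscale of the 2D patch scheme is consistent (to arbitrarily high order) with the full-domain microscale dynamics, errors arising only from approximating the inter-patch shifts.
   Context: $E_i,E_j$ are microscale shifts by one lattice step in $x$ and $y$, $\delta_i:=E_i^{1/2}-E_i^{-1/2}$, $\delta_j:=E_j^{1/2}-E_j^{-1/2}$, so $\delta_iE_i^{1/2}\mathbf v_{i,j}=\mathbf v_{i+1,j}-\mathbf v_{i,j}$ and $\delta_iE_i^{-1/2}\mathbf v_{i,j}=\mathbf v_{i,j}-\mathbf v_{i-1,j}$ (similarly in $j$). $E_x^{\pm r_x}$, $E_y^{\pm r_y}$ are macroscale shifts by one patch width in $x$, $y$, realised in practice by spectral or Lagrangian interpolation through the patches. Such a system arises as the homogeneous ensemble of all $p=p_xp_y$ phase-shifts of the 2D heterogeneous lattice diffusion with $p_x$-, $p_y$-periodic diffusivities. *)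

From HB Require Import structures.
From mathcomp Require Import all_boot all_order all_algebra.
From mathcomp Require Import all_classical all_reals all_analysis.
Set Implicit Arguments. Unset Strict Implicit. Unset Printing Implicit Defensive.
Import Order.TTheory GRing.Theory Num.Theory.
Import numFieldNormedType.Exports.
Local Open Scope ring_scope.

Definition field (R : realType) (p : nat) := R -> R -> 'cV[R]_p.

(* Shift operators E^a in x and y (E_i = exp(d_x d/dx) is shiftx d_x, etc.). *)
Definition shiftx (R : realType) (p : nat) (a : R) (f : field R p) : field R p :=
  fun x y => f (x + a) y.
Definition shifty (R : realType) (p : nat) (a : R) (f : field R p) : field R p :=
  fun x y => f x (y + a).

(* The microscale operator
     delta_i (Khx E_i^{1/2} - Kcx E_i^{-1/2})
   + delta_j (Khy E_j^{1/2} - Kcy E_j^{-1/2}) + D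
   written out using  delta E^{1/2} = E - 1  and  delta E^{-1/2} = 1 - E^{-1},
   with E_i = shift by dx in x and E_j = shift by dy in y. *)
Definition microL (R : realType) (p : nat)
  (Khx Kcx Khy Kcy D : 'M[R]_p) (dx dy : R) (f : field R p) : field R p :=
  fun x y =>
    Khx *m (shiftx dx f x y - f x y) - Kcx *m (f x y - shiftx (- dx) f x y)
  + Khy *m (shifty dy f x y - f x y) - Kcy *m (f x y - shifty (- dy) f x y)
  + D *m f x y.

Definition patchL (R : realType) (p : nat)
  (Khx Kcx Khy Kcy D : 'M[R]_p) (w : nat -> nat -> 'cV[R]_p) (i j : nat)
  : 'cV[R]_p :=
    Khx *m (w i.+1 j - w i j) - Kcx *m (w i j - w i.-1 j)
  + Khy *m (w i j.+1 - w i j) - Kcy *m (w i j - w i j.-1)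
  + D *m w i j.

From HB Require Import structures.
From mathcomp Require Import all_boot all_order all_algebra.
From mathcomp Require Import all_classical all_reals all_analysis.
From mathcomp Require Import ring.
Set Implicit Arguments. Unset Strict Implicit. Unset Printing Implicit Defensive.
Import Order.TTheory GRing.Theory Num.Theory.
Import numFieldNormedType.Exports.
Local Open Scope ring_scope.

(* The interior point i of a patch with n points and spacing d sits at the
   offset (i - (n+1)/2) d from the patch centre.  The key observation is that
   the edge conditions, with exact inter-patch shifts r H = n d, place the
   ghost values i = 0 and i = n+1 exactly on the smooth field too: the value
   at i = n+1 is the value at i = 1 of the patch shifted by n d, i.e. the
   field at offset (n+1 - (n+1)/2) d.  So every point of the "halo"
   {0..n_x+1} x {1..n_y} and {1..n_x} x {0..n_y+1} reads the smooth field
   (lemmas [patch_halo_x], [patch_halo_y]); hence at any interior point the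
   patch right-hand side [patchL] coincides with the microscale operator
   [microL] applied to the smooth field ([patchL_microL]), and the patch
   dynamics become the microscale dynamics at that point.  As the patch
   centre ranges over the continuum, the point (1,1) of a suitable patch
   reaches any (x,y), which yields the theorem. *)

Definition offset (R : realType) (n : nat) (d : R) (i : nat) : R :=
  (i%:R - (n%:R + 1) / 2) * d.

Lemma offsetS (R : realType) (n : nat) (d : R) (i : nat) :
  offset n d i.+1 = offset n d i + d.
Proof. by rewrite /offset -addn1 natrD; ring. Qed.

Lemma offset_right_edge (R : realType) (n : nat) (d : R) :
  offset n d n.+1 = n%:R * d + offset n d 1.
Proof. by rewrite /offset -addn1 natrD; ring. Qed.

Lemma offset_left_edge (R : realType) (n : nat) (d : R) :
  offset n d 0 = offset n d n - n%:R * d.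
Proof. by rewrite /offset; ring. Qed.

Section PatchScheme.

Variables (R : realType) (p nx ny : nat).
Variables (Khx Kcx Khy Kcy D : 'M[R]_p) (dx dy Hx Hy rx ry : R).
Variables (u : R -> R -> R -> nat -> nat -> 'cV[R]_p) (v : R -> R -> R -> 'cV[R]_p).

Hypothesis width_x : nx%:R * dx = rx * Hx.
Hypothesis width_y : ny%:R * dy = ry * Hy.

Hypothesis u_interp : forall (t X Y : R) (i j : nat),
  (1 <= i <= nx)%N -> (1 <= j <= ny)%N ->
  u t X Y i j = v t (X + offset nx dx i) (Y + offset ny dy j).

Hypothesis u_dyn : forall (t X Y : R) (i j : nat),
  (1 <= i <= nx)%N -> (1 <= j <= ny)%N ->
  is_derive t (1 : R) (fun s => u s X Y i j)
    (patchL Khx Kcx Khy Kcy D (u t X Y) i j).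

Hypothesis edge_x : forall (t X Y : R) (j : nat), (1 <= j <= ny)%N ->
  u t X Y nx.+1 j = u t (X + rx * Hx) Y 1%N j /\
  u t X Y 0%N j = u t (X - rx * Hx) Y nx j.

Hypothesis edge_y : forall (t X Y : R) (i : nat), (1 <= i <= nx)%N ->
  u t X Y i ny.+1 = u t X (Y + ry * Hy) i 1%N /\
  u t X Y i 0%N = u t X (Y - ry * Hy) i ny.

Hypothesis nx_gt0 : (0 < nx)%N.
Hypothesis ny_gt0 : (0 < ny)%N.

Lemma patch_halo_x (t X Y : R) (i j : nat) :
  (i <= nx.+1)%N -> (1 <= j <= ny)%N ->
  u t X Y i j = v t (X + offset nx dx i) (Y + offset ny dy j).
Proof.
move=> ile hj; have nx1 : (1 <= nx <= nx)%N by rewrite nx_gt0 leqnn.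
have one1 : (1 <= 1 <= nx)%N by rewrite leqnn nx_gt0.
case: i ile => [|i] ile.
  rewrite (edge_x t X Y hj).2 u_interp // offset_left_edge width_x.
  by congr v; ring.
have [->|ilt] := eqVneq i nx.
  rewrite (edge_x t X Y hj).1 u_interp // offset_right_edge width_x.
  by congr v; ring.
by rewrite u_interp //= ltn_neqAle ilt -ltnS ile.
Qed.

Lemma patch_halo_y (t X Y : R) (i j : nat) :
  (1 <= i <= nx)%N -> (j <= ny.+1)%N ->
  u t X Y i j = v t (X + offset nx dx i) (Y + offset ny dy j).
Proof.
move=> hi jle; have ny1 : (1 <= ny <= ny)%N by rewrite ny_gt0 leqnn.
have one1 : (1 <= 1 <= ny)%N by rewrite leqnn ny_gt0.
case: j jle => [|j] jle.
  rewrite (edge_y t X Y hi).2 u_interp // offset_left_edge width_y.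
  by congr v; ring.
have [->|jlt] := eqVneq j ny.
  rewrite (edge_y t X Y hi).1 u_interp // offset_right_edge width_y.
  by congr v; ring.
by rewrite u_interp //= ltn_neqAle jlt -ltnS jle.
Qed.

Lemma patchL_microL (t X Y : R) (i j : nat) :
  (1 <= i <= nx)%N -> (1 <= j <= ny)%N ->
  patchL Khx Kcx Khy Kcy D (u t X Y) i j =
  microL Khx Kcx Khy Kcy D dx dy (v t) (X + offset nx dx i) (Y + offset ny dy j).
Proof.
case: i => [//|i] hi; case: j => [//|j] hj.
set x := X + offset nx dx i.+1; set y := Y + offset ny dy j.+1.
have hiS : (i.+2 <= nx.+1)%N by case/andP: hi.
have hjS : (j.+2 <= ny.+1)%N by case/andP: hj.
have centre : u t X Y i.+1 j.+1 = v t x y by rewrite patch_halo_x // ltnW.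
have east : u t X Y i.+2 j.+1 = v t (x + dx) y.
  by rewrite patch_halo_x // (offsetS nx dx i.+1) addrA.
have west : u t X Y i j.+1 = v t (x - dx) y.
  by rewrite patch_halo_x ?(ltnW (ltnW hiS)) // /x (offsetS nx dx i) addrA addrK.
have north : u t X Y i.+1 j.+2 = v t x (y + dy).
  by rewrite patch_halo_y // (offsetS ny dy j.+1) addrA.
have south : u t X Y i.+1 j = v t x (y - dy).
  by rewrite patch_halo_y ?(ltnW (ltnW hjS)) // /y (offsetS ny dy j) addrA addrK.
by rewrite /patchL /microL /shiftx /shifty centre east west north south.
Qed.

Lemma patch_point_micro (t X Y : R) (i j : nat) :
  (1 <= i <= nx)%N -> (1 <= j <= ny)%N ->
  is_derive t (1 : R) (fun s => v s (X + offset nx dx i) (Y + offset ny dy j))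
    (microL Khx Kcx Khy Kcy D dx dy (v t) (X + offset nx dx i) (Y + offset ny dy j)).
Proof.
move=> hi hj; rewrite -patchL_microL //.
have -> : (fun s => v s (X + offset nx dx i) (Y + offset ny dy j)) =
          (fun s => u s X Y i j) by apply: funext => s; rewrite u_interp.
exact: u_dyn.
Qed.

End PatchScheme.

(* u t X Y i j = v^{I,J}_{i,j}(t), the patch values, with the patch centre
   (X,Y) = (I H_x, J H_y) interpolated to a continuum so that the macroscale
   shifts E_x^{+-r_x}, E_y^{+-r_y} act as X |-> X +- r_x H_x, Y |-> Y +- r_y H_y.
   v is the smooth field interpolating the patch values at interior points,
   v t x y, on which E_i, E_j act as shifts by dx, dy; the mid-patch value
   V^{I,J} = v^{I,J}_{(n_x+1)/2,(n_y+1)/2} is v t X Y. *)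
Theorem theorem8 (R : realType) (p nx ny : nat)
  (Khx Kcx Khy Kcy D : 'M[R]_p) (dx dy Hx Hy rx ry : R)
  (u : R -> R -> R -> nat -> nat -> 'cV[R]_p) (v : R -> R -> R -> 'cV[R]_p) :
  (0 < p)%N -> (0 < nx)%N -> (0 < ny)%N ->
  0 < dx -> 0 < dy -> 0 < Hx -> 0 < Hy -> 0 < rx -> 0 < ry ->
  nx%:R * dx = rx * Hx -> ny%:R * dy = ry * Hy ->
  (* smooth-field interpretation of the patch interior values *)
  (forall (t X Y : R) (i j : nat), (1 <= i <= nx)%N -> (1 <= j <= ny)%N ->
     u t X Y i j = v t (X + (i%:R - (nx%:R + 1) / 2) * dx)
                       (Y + (j%:R - (ny%:R + 1) / 2) * dy)) ->
  (* patch interior dynamics *)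
  (forall (t X Y : R) (i j : nat), (1 <= i <= nx)%N -> (1 <= j <= ny)%N ->
     is_derive t (1 : R) (fun s => u s X Y i j)
       (patchL Khx Kcx Khy Kcy D (u t X Y) i j)) ->
  (* edge values via exact inter-patch shifts *)
  (forall (t X Y : R) (j : nat), (1 <= j <= ny)%N ->
     u t X Y nx.+1 j = u t (X + rx * Hx) Y 1%N j /\
     u t X Y 0%N j = u t (X - rx * Hx) Y nx j) ->
  (forall (t X Y : R) (i : nat), (1 <= i <= nx)%N ->
     u t X Y i ny.+1 = u t X (Y + ry * Hy) i 1%N /\
     u t X Y i 0%N = u t X (Y - ry * Hy) i ny) ->
  (* conclusion: the mid-patch field obeys the microscale operator *)
  forall t X Y : R,
    is_derive t (1 : R) (fun s => v s X Y) (microL Khx Kcx Khy Kcy D dx dy (v t) X Y).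
Proof.
move=> _ nx0 ny0 _ _ _ _ _ _ wx wy interp dyn ex ey t x y.
(* Place the patch so that its interior point (1,1) lies at (x,y). *)
have i1 : (1 <= 1 <= nx)%N by rewrite leqnn nx0.
have j1 : (1 <= 1 <= ny)%N by rewrite leqnn ny0.
have := patch_point_micro wx wy interp dyn ex ey nx0 ny0
  t (x - offset nx dx 1) (y - offset ny dy 1) i1 j1.
by rewrite !subrK.
Qed.
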